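(* Let $T=\bigoplus_p\mathbb Z(p)$ (sum over all primes) and $G=\prod_p\mathbb Z(p)$, so $T$ is the torsion subgroup of $G$. Then $G$ and $T$ are strongly co-Hopfian, but $G/T$ is not strongly co-Hopfian.
   Context: All groups are abelian. A group $G$ is strongly co-Hopfian if for every endomorphism $f$ of $G$ there is $n\in\mathbb N$ with $f^n(G)=f^{n+1}(G)$. $\mathbb Z(p)$ denotes the cyclic group of order $p$. *)

From HB Require Import structures.
From mathcomp Require Import all_boot all_algebra.
From mathcomp Require Import boolp classical_sets.
From mathcomp Require Import ring_quotient generic_quotient.

Set Implicit Arguments.
Unset Strict Implicit.
Unset Printing Implicit Defensive.

Import GRing.Theory.

Definition strongly_coHopfian (V : zmodType) : Prop :=
  forall f : {additive V -> V},
    exists n : nat, range (iter n f) = range (iter n.+1 f).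

(* The p-th coordinate lives in {0,..,p-1} = Z(p) when p is prime; the
   coordinates at non-primes are forced to be 0 (trivial group Z/1). *)
Definition pmod (n : nat) : nat := if prime n then n else 1.

Lemma pmod_gt0 n : 0 < pmod n.
Proof. by rewrite /pmod; case: ifP => // /prime_gt0. Qed.

Record Gprod := MkG { gval : nat -> nat; gvalP : `[< forall n, gval n < pmod n >] }.

HB.instance Definition _ := [isSub for gval].
HB.instance Definition _ := [Choice of Gprod by <:].

Lemma gval_lt (x : Gprod) n : gval x n < pmod n.
Proof. by move: (gvalP x) => /asboolP. Qed.

Definition gzero : Gprod.
Proof. by refine (@MkG (fun _ => 0) _); apply/asboolP => n; exact: pmod_gt0. Defined.

Definition gadd (x y : Gprod) : Gprod.
Proof.
refine (@MkG (fun n => (gval x n + gval y n) %% pmod n) _).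
by apply/asboolP => n; rewrite ltn_pmod // pmod_gt0.
Defined.

Definition gopp (x : Gprod) : Gprod.
Proof.
refine (@MkG (fun n => (pmod n - gval x n) %% pmod n) _).
by apply/asboolP => n; rewrite ltn_pmod // pmod_gt0.
Defined.

Lemma gaddA : associative gadd.
Proof.
move=> x y z; apply: val_inj; apply: funext => n /=.
by rewrite modnDml modnDmr addnA.
Qed.

Lemma gaddC : commutative gadd.
Proof. by move=> x y; apply: val_inj; apply: funext => n /=; rewrite addnC. Qed.

Lemma gadd0 : left_id gzero gadd.
Proof.
by move=> x; apply: val_inj; apply: funext => n /=; rewrite add0n modn_small // gval_lt.
Qed.

Lemma gaddN : left_inverse gzero gopp gadd.
Proof.
move=> x; apply: val_inj; apply: funext => n /=.
by rewrite modnDml subnK ?modnn // ltnW // gval_lt.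
Qed.

HB.instance Definition _ := GRing.isZmodule.Build Gprod gaddA gaddC gadd0 gaddN.

Definition G : zmodType := Gprod.

Definition Tset : {pred G} :=
  fun x => `[< exists N, forall n, N <= n -> gval x n = 0 >].

Lemma Tset_zmod_closed : GRing.zmod_closed Tset.
Proof.
split.
  by apply/asboolP; exists 0.
move=> x y /asboolP [N1 H1] /asboolP [N2 H2]; apply/asboolP.
exists (maxn N1 N2) => n Hn.
have -> : gval (x - y)%R n = (gval x n + (pmod n - gval y n) %% pmod n) %% pmod n by [].
rewrite H1; last by apply: leq_trans Hn; rewrite leq_maxl.
rewrite H2; last by apply: leq_trans Hn; rewrite leq_maxr.
by rewrite subn0 modnn add0n mod0n.

Qed.

HB.instance Definition _ := GRing.isZmodClosed.Build G Tset Tset_zmod_closed.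

Record Tsum := MkT { tval : G; tvalP : tval \in Tset }.

HB.instance Definition _ := [isSub for tval].
HB.instance Definition _ := [Choice of Tsum by <:].
HB.instance Definition _ := [SubChoice_isSubZmodule of Tsum by <:].

Definition T : zmodType := Tsum.

Import Quotient.
Definition GmodT : zmodType := Quotient.quot Tset.

(** An additive endomorphism [f] of [G], or of [T], multiplies the [p]-th
    coordinate by some [a_p] in [Z(p)]: an element vanishing at [p] is [p]
    times an element with no larger support.  Dividing coordinatewise by the
    nonzero [a_p] shows [f(G) = f(f(G))].

    The quotient [G/T] is torsion-free and divisible, and
    [P |-> (P(t_p) mod p)_p], where [t_p] is the largest [t] with [t ^ t <= p],
    embeds [Z[X]] into it: if [p] divides [P(t_p)] for almost all [p] then
    [|P(t_p)| < p] forces [P(t_p) = 0] for infinitely many [t_p].  Take a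
    subgroup [C] maximal with [C] meeting [Z[X]] trivially; then
    [(G/T)/(C + Z[X])] is torsion, so multiplication by [X] extends to an
    endomorphism [f] of [G/T] killing [C].  Now [X ^ n] lies in the image of
    [f ^ n] but not in that of [f ^ (n + 1)]. *)

From HB Require Import structures.
From mathcomp Require Import all_boot all_order all_algebra.
From mathcomp Require Import boolp classical_sets.
From mathcomp Require Import ring_quotient generic_quotient zify.
Set Implicit Arguments.
Unset Strict Implicit.
Unset Printing Implicit Defensive.

Import Order.TTheory GRing.Theory Num.Theory.
Local Open Scope ring_scope.

(* [t ^ t <= p] makes [self_root p] grow more slowly than any power of [p]. *)
Definition self_root (p : nat) : nat := (\max_(t < p.+1 | t ^ t <= p) t)%N.

Lemma self_root_pow p : (0 < p)%N -> (self_root p ^ self_root p <= p)%N.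
Proof.
move=> p_gt0; rewrite /self_root; elim/big_ind: _ => // a b ha hb.
by rewrite /maxn; case: ltnP.
Qed.

Lemma self_root_geq t p : (t ^ t <= p)%N -> (t <= self_root p)%N.
Proof.
move=> ttp; have tp : (t < p.+1)%N.
  rewrite ltnS (leq_trans _ ttp) //; case: t ttp => // t _.
  by rewrite -[X in (X <= _)%N]expn1 leq_pexp2l.
exact: (@leq_bigmax_cond _ (fun t : 'I_p.+1 => (t ^ t <= p)%N) val (Ordinal tp)).
Qed.

Lemma abs_horner_lt (P : {poly int}) (t : nat) :
  (forall i, (`|(P`_i)%R| < t)%N) -> (`|P.[t%:Z]| < t ^ size P)%N.
Proof.
move=> coef_lt; have t_gt0 : (0 < t)%N by apply: leq_ltn_trans (coef_lt 0%N).
rewrite -ltz_nat abszE horner_coef (le_lt_trans (ler_norm_sum _ _ _)) //.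
apply: (@le_lt_trans _ _ (\sum_(i < size P) (t.-1 * t ^ i)%N)%:Z).
  rewrite -[Posz (\sum_(_ < _) _)]natz natr_sum ler_sum // => i _.
  rewrite natz normrM normrX -!abszE absz_nat PoszM -[Posz (t ^ i)]natz natrX natz.
  by rewrite ler_wpM2r ?exprn_ge0 // lez_nat -ltnS prednK.
by rewrite ltz_nat -big_distrr /= -predn_exp prednK ?expn_gt0 ?t_gt0.
Qed.

Lemma poly_unbounded_roots_eq0 (P : {poly int}) :
  (forall k, exists2 t : nat, (k <= t)%N & root P t%:Z) -> P = 0.
Proof.
move=> roots.
have [rs [rs_size rs_uniq rs_roots]] : exists rs : seq nat,
    [/\ size rs = size P, uniq rs & all (fun t => root P t%:Z) rs].
  elim: (size P) => [|n [rs [rs_size rs_uniq rs_roots]]]; first by exists [::].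
  have [t rs_lt_t rt] := roots (\max_(r <- rs) r).+1.
  exists (t :: rs); split=> /=; rewrite ?rs_size ?rt ?rs_uniq ?andbT //.
  apply/negP => t_rs; have := leq_bigmax_seq (F := id) t t_rs isT.
  by rewrite leqNgt rs_lt_t.
apply: (@roots_geq_poly_eq0 _ _ (map Posz rs)).
- by rewrite all_map.
- by rewrite map_inj_uniq // => ? ? [].
- by rewrite size_map rs_size.
Qed.

Section ComplementOfImage.

Variables (V W : zmodType) (psi : {additive W -> V}).

Lemma exists_complement : exists C : set V,
  [/\ C 0, (forall x y, C x -> C y -> C (x - y)), (forall P, C (psi P) -> psi P = 0)
    & forall v, exists k c P, [/\ (0 < k)%N, C c & v *+ k = c + psi P]].
Proof.
pose avoids (C : set V) :=
  (forall x y, C x -> C y -> C (x - y)) /\ (forall P, C (psi P) -> psi P = 0).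
have [|A [[A_sub A_psi] A_max]] := @Zorn_bigcup _ avoids.
  move=> F F_avoid F_total; split=> [x y [X FX Xx] [Y FY Yy]|P [X FX]].
    have [XY|YX] := F_total X Y FX FY.
      by exists Y => //; apply: (F_avoid Y FY).1 => //; exact: XY.
    by exists X => //; apply: (F_avoid X FX).1 => //; exact: YX.
  exact: (F_avoid X FX).2.
have A0 : A 0.
  apply: contrapT => nA0; have A_lt0 : (A `<` [set 0])%classic.
    by split=> [x Ax|/(_ 0 erefl)//]; move: (A_sub x x Ax Ax); rewrite subrr.
  by apply: (A_max _ A_lt0); split=> [x y -> ->|P ->]; rewrite ?subr0.
exists A; split=> // v.
pose B : set V := fun w => exists c (m : int), A c /\ w = c + v *~ m.
have [[c [m [P [Ac cm nz]]]]|B_avoid] :=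
  pselect (exists c (m : int) P, [/\ A c, c + v *~ m = psi P & psi P != 0]).
  case: m cm => [[|n]|n] cm.
  - by rewrite mulr0z addr0 in cm; move: nz; rewrite A_psi ?eqxx // -cm.
  - exists n.+1, (- c), P; split=> //; first by rewrite -sub0r; apply: A_sub.
    by rewrite -cm pmulrn addKr.
  - exists n.+1, c, (- P); split=> //.
    by rewrite raddfN -cm NegzE mulrNz -pmulrn opprB addrC subrK.
have B_sub x y : B x -> B y -> B (x - y).
  move=> [c [m [Ac ->]]] [c' [m' [Ac' ->]]]; exists (c - c'), (m - m').
  by split; [apply: A_sub | rewrite mulrzBr opprD addrACA].
have B_psi P : B (psi P) -> psi P = 0.
  move=> [c [m [Ac cm]]]; apply/eqP/negPn/negP => nz.
  by apply: B_avoid; exists c, m, P.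
have B_A : (B `<=` A)%classic.
  apply: contrapT => nBA; apply: (A_max B _ (conj B_sub B_psi)).
  by split=> // a Aa; exists a, 0; rewrite mulr0z addr0.
exists 1%N, v, 0; split; rewrite ?raddf0 ?addr0 //.
by apply: B_A; exists 0, 1; rewrite add0r.
Qed.

End ComplementOfImage.

Section ExtensionAlongEmbedding.

Variables (V W : zmodType) (psi : {additive W -> V}) (C : set V).
Hypotheses (C0 : C 0) (C_sub : forall x y, C x -> C y -> C (x - y)).
Hypothesis C_psi : forall P, C (psi P) -> psi P = 0.
Hypothesis C_span : forall v, exists k c P, [/\ (0 < k)%N, C c & v *+ k = c + psi P].
Hypothesis psi_eq0 : forall P, psi P = 0 -> P = 0.
Hypothesis V_torsionfree : forall (v : V) k, (0 < k)%N -> v *+ k = 0 -> v = 0.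
Hypothesis V_divisible : forall (v : V) k, (0 < k)%N -> exists w, w *+ k = v.
Variable sigma : {additive W -> W}.

Lemma C_natmul x n : C x -> C (x *+ n).
Proof.
move=> Cx; elim: n => [|n IH]; first by rewrite mulr0n.
have -> : x *+ n.+1 = x *+ n - (0 - x) by rewrite sub0r opprK mulrSr.
by apply: C_sub => //; apply: C_sub.
Qed.

Definition extends_at (v w : V) := exists k c P,
  [/\ (0 < k)%N, C c, v *+ k = c + psi P & w *+ k = psi (sigma P)].

Lemma extends_at_total v : exists w, extends_at v w.
Proof.
have [k [c [P [k_gt0 Cc vk]]]] := C_span v.
by have [w wk] := V_divisible (psi (sigma P)) k_gt0; exists w, k, c, P.
Qed.

Lemma extends_at_functional v w w' : extends_at v w -> extends_at v w' -> w = w'.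
Proof.
move=> [k [c [P [k_gt0 Cc vk wk]]]] [k' [c' [P' [k'_gt0 Cc' vk' wk']]]].
have cP : c *+ k' - c' *+ k = psi (P' *+ k - P *+ k').
  have : (c + psi P) *+ k' = (c' + psi P') *+ k by rewrite -vk -vk' -!mulrnA mulnC.
  rewrite !mulrnDl raddfB (raddfMn psi) (raddfMn psi) => ck.
  by apply/eqP; rewrite subr_eq addrAC eq_sym subr_eq addrC ck.
have PP : P *+ k' = P' *+ k.
  apply/eqP; rewrite eq_sym -subr_eq0; apply/eqP/psi_eq0/C_psi.
  by rewrite -cP; apply: C_sub; apply: C_natmul.
apply/eqP; rewrite -subr_eq0; apply/eqP/(@V_torsionfree _ (k * k')).
  by rewrite muln_gt0 k_gt0.
rewrite mulrnBl mulrnA wk [in X in _ - X]mulnC mulrnA wk'.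
by rewrite -!raddfMn PP subrr.
Qed.

Lemma extends_atB v v' w w' :
  extends_at v w -> extends_at v' w' -> extends_at (v - v') (w - w').
Proof.
move=> [k [c [P [k_gt0 Cc vk wk]]]] [k' [c' [P' [k'_gt0 Cc' vk' wk']]]].
exists (k * k')%N, (c *+ k' - c' *+ k), (P *+ k' - P' *+ k); split.
- by rewrite muln_gt0 k_gt0.
- by apply: C_sub; apply: C_natmul.
- rewrite mulrnBl mulrnA vk [in X in _ - X]mulnC mulrnA vk'.
  by rewrite !mulrnDl raddfB (raddfMn psi) (raddfMn psi) opprD addrACA.
- rewrite mulrnBl mulrnA wk [in X in _ - X]mulnC mulrnA wk'.
  by rewrite !raddfB (raddfMn sigma) (raddfMn sigma) (raddfMn psi) (raddfMn psi).
Qed.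

Lemma extends_at_psi P : extends_at (psi P) (psi (sigma P)).
Proof. by exists 1%N, 0, P; rewrite add0r. Qed.

Lemma extension_exists : exists f : {additive V -> V},
  (forall P, f (psi P) = psi (sigma P)) /\ forall v, extends_at v (f v).
Proof.
have [f f_ext] := choice extends_at_total.
have f_is_additive : zmod_morphism f.
  by move=> x y; apply: extends_at_functional (f_ext _) (extends_atB (f_ext x) (f_ext y)).
pose fa : {additive V -> V} := HB.pack f (GRing.isZmodMorphism.Build V V f f_is_additive).
exists fa; split=> [P|v]; last exact: f_ext.
exact: extends_at_functional (f_ext _) (extends_at_psi P).
Qed.

End ExtensionAlongEmbedding.

Lemma poly_embedding_not_strongly_coHopfian (V : zmodType)
    (psi : {additive {poly int} -> V}) :
  (forall P, psi P = 0 -> P = 0) ->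
  (forall (v : V) k, (0 < k)%N -> v *+ k = 0 -> v = 0) ->
  (forall (v : V) k, (0 < k)%N -> exists w, w *+ k = v) ->
  ~ strongly_coHopfian V.
Proof.
move=> psi_eq0 V_tf V_div.
have [C [C0 C_sub C_psi C_span]] := exists_complement psi.
have [f [f_psi f_ext]] :=
  extension_exists C0 C_sub C_psi C_span psi_eq0 V_tf V_div ('X \o* idfun).
have iter_psi m P : iter m f (psi P) = psi (P * 'X^m).
  by elim: m => [|m IH]; rewrite ?mulr1 //= IH f_psi /= -mulrA -exprSr.
have iter_shape m v : exists k (Q : {poly int}),
    (0 < k)%N /\ iter m.+1 f v *+ k = psi (Q * 'X^(m.+1)).
  elim: m => [|m [k [Q [k_gt0 fk]]]].
    by have [k [c [P [k_gt0 _ _ fk]]]] := f_ext v; exists k, P; rewrite expr1.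
  exists k, Q; split=> //.
  by rewrite iterS -raddfMn fk f_psi /= -mulrA -exprSr.
move/(_ f) => [n fn].
have [v _ fv] : range (iter n.+1 f) (psi 'X^n).
  by rewrite -fn; exists (psi 1) => //; rewrite iter_psi mul1r.
have [k [Q [k_gt0 fk]]] := iter_shape n v.
have /(congr1 (coefp n)) : 'X^n *+ k - Q * 'X^(n.+1) = 0.
  by apply: psi_eq0; rewrite raddfB raddfMn -fv fk subrr.
rewrite /= coefB coefMn coefXn eqxx coefMXn ltnSn coef0 subr0 mulr1n.
by move/eqP; rewrite pnatr_eq0 => /eqP k0; rewrite k0 in k_gt0.
Qed.

Lemma pmod_prime p : prime p -> pmod p = p.
Proof. by rewrite /pmod => ->. Qed.

Lemma pmod_nonprime n : ~~ prime n -> pmod n = 1%N.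
Proof. by rewrite /pmod => /negbTE ->. Qed.

Lemma gval_ltp (x : G) p : prime p -> (gval x p < p)%N.
Proof. by move=> pp; rewrite -[X in (_ < X)%N]pmod_prime ?gval_lt. Qed.

Lemma gval_nonprime (x : G) n : ~~ prime n -> gval x n = 0%N.
Proof. by move=> np; have := gval_lt x n; rewrite pmod_nonprime //; case: gval. Qed.

Lemma G_ext (x y : G) : (forall n, gval x n = gval y n) -> x = y.
Proof. by move=> xy; apply: val_inj; apply: funext. Qed.

Lemma gval0 n : gval (0 : G) n = 0%N.
Proof. by []. Qed.

Lemma gvalD (x y : G) n : gval (x + y) n = ((gval x n + gval y n) %% pmod n)%N.
Proof. by []. Qed.

Lemma gvalMn (x : G) k n : gval (x *+ k) n = ((k * gval x n) %% pmod n)%N.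
Proof.
elim: k => [|k IH]; first by rewrite mulr0n mul0n mod0n.
by rewrite mulrS gvalD IH modnDmr mulSn.
Qed.

Lemma gvalB_eq0 (x y : G) n : gval x n = gval y n -> gval (x - y) n = 0%N.
Proof.
move=> xy; rewrite gvalD /= modnDmr xy subnKC ?modnn //.
exact/ltnW/gval_lt.
Qed.

Definition mkG {h : nat -> nat} (h_lt : forall n, (h n < pmod n)%N) : G :=
  MkG (asboolT h_lt).

Lemma G_choice (R : nat -> nat -> Prop) :
  (forall n, exists u, (u < pmod n)%N /\ R n u) -> exists x : G, forall n, R n (gval x n).
Proof.
move=> Rex; have [h hP] := choice Rex; have h_lt n : (h n < pmod n)%N by case: (hP n).
by exists (mkG h_lt) => n; case: (hP n).
Qed.

Definition ep (p : nat) : G :=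
  @mkG (fun n => (n == p) %% pmod n)%N (fun n => ltn_pmod _ (pmod_gt0 n)).

Lemma gval_ep p n : gval (ep p) n = ((n == p) %% pmod n)%N.
Proof. by []. Qed.

Lemma ep_in_Tset p : ep p \in Tset.
Proof.
apply/asboolP; exists p.+1 => n; rewrite gval_ep.
by case: eqP => [->|_]; rewrite ?ltnn ?mod0n.
Qed.

Definition supp_sub (z x : G) := forall n, gval x n = 0%N -> gval z n = 0%N.

Lemma supp_sub_Tset (z x : G) : supp_sub z x -> x \in Tset -> z \in Tset.
Proof. by move=> zx /asboolP[N xN]; apply/asboolP; exists N => n /xN/zx. Qed.

Lemma modn_inv_exists (a p : nat) :
  prime p -> ~~ (p %| a)%N -> exists i, ((a * i) %% p = 1)%N.
Proof.
move=> pp pNa; have a_gt0 : (0 < a)%N by case: posnP pNa => // ->; rewrite dvdn0.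
have /eqP cop : coprime a p by rewrite coprime_sym prime_coprime.
case: (egcdnP p a_gt0) => km kn e _; exists km.
by rewrite mulnC e cop modnMDl modn_small ?prime_gt1.
Qed.

Lemma G_coord_div (c : nat -> nat) (x : G) :
  exists z : G, supp_sub z x /\
    forall p, prime p -> ~~ (p %| c p)%N -> ((c p * gval z p) %% p)%N = gval x p.
Proof.
pose R n u := (gval x n = 0%N -> u = 0%N) /\
  (prime n -> ~~ (n %| c n)%N -> ((c n * u) %% n)%N = gval x n).
have [|z zR] := @G_choice R; last first.
  by exists z; split=> [n|p]; [exact: (zR n).1 | exact: (zR p).2].
move=> n; have [/andP[pn nNc]|no_inv] := boolP (prime n && ~~ (n %| c n)%N); last first.
  exists 0%N; split; rewrite ?pmod_gt0 //; split=> // pn nNc.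
  by rewrite pn nNc in no_inv.
have [i ci] := modn_inv_exists pn nNc.
exists ((i * gval x n) %% n)%N; split; first by rewrite pmod_prime // ltn_mod prime_gt0.
split=> [->|_ _]; first by rewrite muln0 mod0n.
by rewrite modnMmr mulnA -modnMml ci mul1n modn_small ?gval_ltp.
Qed.

Lemma G_divn (c : nat) (x : G) : (forall p, prime p -> (p %| c)%N -> gval x p = 0%N) ->
  exists2 z : G, supp_sub z x & z *+ c = x.
Proof.
move=> x0; have [z [zx zc]] := G_coord_div (fun=> c) x; exists z => //.
apply: G_ext => n; rewrite gvalMn.
have [pn|np] := boolP (prime n); last by rewrite !gval_nonprime // pmod_nonprime ?modn1.
have [nc|nNc] := boolP (n %| c)%N; last by rewrite pmod_prime // zc.
by rewrite x0 // pmod_prime //; apply/eqP/dvdn_mulr.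
Qed.

Section SupportClosedSubgroup.

Variables (U : zmodType) (j : {additive U -> G}).
Hypotheses (j_inj : injective j) (ep_in_j : forall p, exists e, j e = ep p).
Hypothesis j_supp_closed : forall u z, supp_sub z (j u) -> exists v, j v = z.

Lemma additive_coord (f : {additive U -> U}) e u p : j e = ep p ->
  gval (j (f u)) p = ((gval (j (f e)) p * gval (j u) p) %% pmod p)%N.
Proof.
move=> je; have [pp|np] := boolP (prime p); last first.
  by rewrite gval_nonprime // pmod_nonprime ?modn1.
set a := gval (j u) p.
have jep_a : gval (j (e *+ a)) p = a.
  rewrite raddfMn je gvalMn gval_ep eqxx pmod_prime // (modn_small (prime_gt1 pp)).
  by rewrite muln1 modn_small ?gval_ltp.
have [z zy pz] : exists2 z : G, supp_sub z (j (u - e *+ a)) & z *+ p = j (u - e *+ a).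
  apply: G_divn => q pq; rewrite dvdn_prime2 // => /eqP->.
  by rewrite raddfB gvalB_eq0.
have [v jv] := j_supp_closed zy; rewrite -jv -raddfMn in pz; move/j_inj in pz.
rewrite -(subrK (e *+ a) u) -pz !raddfD !raddfMn gvalD !gvalMn pmod_prime //.
by rewrite modnMr add0n modn_mod mulnC.
Qed.

Lemma supp_closed_strongly_coHopfian : strongly_coHopfian U.
Proof.
move=> f; exists 1%N; have [e je] := choice ep_in_j.
pose a p := gval (j (f (e p))) p.
have fcoord u p : gval (j (f u)) p = ((a p * gval (j u) p) %% pmod p)%N.
  exact: additive_coord.
apply/seteqP; split=> _ [u _ <-] /=; last by exists (f u).
have [z [zu za]] := G_coord_div a (j u); have [v jv] := j_supp_closed zu.
exists v => //; apply: j_inj; apply: G_ext => p; rewrite !fcoord jv.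
have [pp|np] := boolP (prime p); last by rewrite !pmod_nonprime ?modn1.
rewrite !pmod_prime //; have [pa|pNa] := boolP (p %| a p)%N; last by rewrite za.
by rewrite !(eqP (dvdn_mulr _ pa)).
Qed.

End SupportClosedSubgroup.

Lemma G_strongly_coHopfian : strongly_coHopfian G.
Proof.
apply: (@supp_closed_strongly_coHopfian _ idfun) => // [p|_ z _].
  by exists (ep p).
by exists z.
Qed.

Lemma T_strongly_coHopfian : strongly_coHopfian T.
Proof.
apply: (@supp_closed_strongly_coHopfian _ \val); first exact: val_inj.
  by move=> p; exists (Sub (ep p) (ep_in_Tset p)).
by move=> u z /supp_sub_Tset/(_ (valP u)) zT; exists (Sub z zT).
Qed.

Lemma Tset_torsion (x : G) : x \in Tset <-> exists2 n : nat, (0 < n)%N & x *+ n = 0.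
Proof.
split=> [/asboolP[N xN]|[n n_gt0 xn]].
  exists N`!; first exact: fact_gt0.
  apply: G_ext => p; rewrite gvalMn gval0.
  have [Np|pN] := leqP N p; first by rewrite xN // muln0 mod0n.
  have [pp|np] := boolP (prime p); last by rewrite pmod_nonprime ?modn1.
  by rewrite pmod_prime //; apply/eqP/dvdn_mulr/dvdn_fact; rewrite prime_gt0 // ltnW.
apply/asboolP; exists n.+1 => p np.
have [pp|/gval_nonprime//] := boolP (prime p).
have /eqP := congr1 (gval^~ p) xn; rewrite gvalMn pmod_prime // -/(dvdn _ _).
by rewrite Euclid_dvdM // gtnNdvd //= /dvdn modn_small ?gval_ltp // => /eqP.
Qed.
Lemma absz_modz (a : int) (m : nat) : (0 < m)%N -> `|(a %% m)%Z|%N = (a %% m)%Z :> int.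
Proof. by move=> m_gt0; rewrite abszE ger0_norm // modz_ge0 // eqz_nat -lt0n. Qed.

Lemma absz_modz_lt (a : int) (m : nat) : (0 < m)%N -> (`|(a %% m)%Z|%N < m)%N.
Proof. by move=> m_gt0; rewrite -ltz_nat absz_modz // ltz_pmod // ltz_nat. Qed.

Definition reduceG (a : nat -> int) : G :=
  @mkG (fun n => `|(a n %% pmod n)%Z|%N) (fun n => absz_modz_lt (a n) (pmod_gt0 n)).

Lemma reduceGB (a b : nat -> int) : reduceG (fun n => a n - b n) = reduceG a - reduceG b.
Proof.
apply: G_ext => n; rewrite gvalD /= modnDmr; have m_gt0 := pmod_gt0 n.
apply/eqP; rewrite -eqz_nat; apply/eqP.
rewrite absz_modz // -modz_nat PoszD -subzn; last exact/ltnW/absz_modz_lt.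
rewrite !absz_modz // addrCA modzDl.
by rewrite [RHS]modzDml -[RHS]modzDmr modzNm modzDmr.
Qed.

Lemma gval_reduceG_eq0 (a : nat -> int) n : gval (reduceG a) n = 0%N -> ((pmod n)%:Z %| a n)%Z.
Proof. by move=> /eqP; rewrite absz_eq0 => /eqP/dvdz_mod0P. Qed.


Local Open Scope quotient_scope.

Lemma piGmodT_eq (x y : G) : (\pi_GmodT x == \pi_GmodT y) = (x - y \in Tset).
Proof. by rewrite Quotient.idealrBE. Qed.

Lemma piGmodT_eq0 (x : G) : (\pi_GmodT x == 0) = (x \in Tset).
Proof. by rewrite -(raddf0 \pi_GmodT) piGmodT_eq subr0. Qed.

Lemma piGmodT_surj (v : GmodT) : exists x : G, \pi_GmodT x = v.
Proof. by exists (repr v); rewrite reprK. Qed.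

Lemma GmodT_torsionfree (v : GmodT) k : (0 < k)%N -> v *+ k = 0 -> v = 0.
Proof.
move=> k_gt0; have [x <-] := piGmodT_surj v; rewrite -raddfMn => /eqP.
rewrite piGmodT_eq0 => /Tset_torsion[m m_gt0 xkm].
apply/eqP; rewrite piGmodT_eq0; apply/Tset_torsion.
by exists (k * m)%N; rewrite ?muln_gt0 ?k_gt0 // mulrnA.
Qed.

Lemma GmodT_divisible (v : GmodT) k : (0 < k)%N -> exists w, w *+ k = v.
Proof.
move=> k_gt0; have [x <-] := piGmodT_surj v.
have [z [_ zk]] := G_coord_div (fun=> k) x.
exists (\pi_GmodT z); rewrite -raddfMn; apply/eqP.
rewrite piGmodT_eq; apply/asboolP; exists k.+1 => p kp.
have [pp|/gval_nonprime//] := boolP (prime p).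
by rewrite gvalB_eq0 // gvalMn pmod_prime // zk // gtnNdvd // ltnW.
Qed.

Definition polyG (P : {poly int}) : G := reduceG (fun n => P.[(self_root n)%:Z]).

Lemma polyG_is_zmod_morphism : zmod_morphism polyG.
Proof.
move=> P Q; rewrite /polyG -reduceGB; congr reduceG.
by apply: funext => n; rewrite hornerD hornerN.
Qed.

HB.instance Definition _ :=
  GRing.isZmodMorphism.Build {poly int} G polyG polyG_is_zmod_morphism.

Definition polyGmodT : {additive {poly int} -> GmodT} := (\pi_GmodT \o polyG)%FUN.

Lemma polyGmodT_eq0 P : polyGmodT P = 0 -> P = 0.
Proof.
move/eqP; rewrite piGmodT_eq0 => /asboolP[N polyGN].
apply: poly_unbounded_roots_eq0 => k.
pose B := (\max_(i < size P) `|(P`_i)%R|)%N.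
have coef_le i : (`|(P`_i)%R| <= B)%N.
  have [i_lt|i_ge] := ltnP i (size P); first exact: (leq_bigmax (Ordinal i_lt)).
  by rewrite nth_default.
pose K := (k + size P + B).+1.
have [p Np pp] := prime_above (N + K ^ K).
set t := self_root p.
have Kt : (K <= t)%N by apply: self_root_geq; lia.
exists t; first lia.
have Pt_lt : (`|P.[t%:Z]| < p)%N.
  apply: leq_trans (self_root_pow (prime_gt0 pp)).
  apply: leq_trans (abs_horner_lt _) _ => [i|].
    by apply: leq_ltn_trans (coef_le i) _; lia.
  by rewrite leq_pexp2l //; lia.
have /gval_reduceG_eq0 : gval (polyG P) p = 0%N by apply: polyGN; lia.
rewrite pmod_prime // dvdzE absz_nat => p_dvd.
rewrite /root -absz_eq0 -leqn0 leqNgt; apply/negP => /dvdn_leq/(_ p_dvd).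
by rewrite leqNgt Pt_lt.
Qed.

Theorem mainTheorem14 :
  (forall x : G, x \in Tset <-> exists2 n : nat, (0 < n)%N & (x *+ n = 0)%R) /\
  strongly_coHopfian G /\ strongly_coHopfian T /\ ~ strongly_coHopfian GmodT.
Proof.
split; first exact: Tset_torsion.
split; first exact: G_strongly_coHopfian.
split; first exact: T_strongly_coHopfian.
apply: (poly_embedding_not_strongly_coHopfian polyGmodT_eq0).
- exact: GmodT_torsionfree.
- exact: GmodT_divisible.
Qed.
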